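(* Let $\mathbf{k}$ be a field of characteristic zero, $n\ge4$, and $S=(a_1,\dots,a_n)$ with all $a_i$ positive integers. Let $B_S=\mathbf{k}[X_1,\dots,X_n]/\langle X_1^{a_1}+\cdots+X_n^{a_n}\rangle=\mathbf{k}[x_1,\dots,x_n]$ where $x_i$ is the image of $X_i$, let $L=\mathrm{lcm}(S)$ and $(d_1,\dots,d_n)=(L/a_1,\dots,L/a_n)$. Then: (a) $\gcd(d_1,\dots,d_n)=1$ and $\mathrm{type}(d_1,\dots,d_n)=\mathrm{cotype}(a_1,\dots,a_n)$. (b) For each $i\in\{1,\dots,n\}$: $\gcd(d_1,\dots,\widehat{d_i},\dots,d_n)\neq1 \iff \mathrm{lcm}(a_1,\dots,\widehat{a_i},\dots,a_n)\neq\mathrm{lcm}(S)\iff i\in J(S)$. (c) $x_1,\dots,x_n$ are homogeneous prime elements of $B_S$ (with respect to the standard $\mathbb{N}$-grading) and are pairwise non-associates.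
   Context: The standard $\mathbb{N}$-grading of $B_S$ is the unique $\mathbb{N}$-grading in which each $x_i$ is homogeneous of degree $d_i=L/a_i$. For a tuple $T=(t_1,\dots,t_n)$: $T_i$ is $T$ with the $i$-th entry omitted; $J^*(T)=\{i:\gcd(T_i)\neq\gcd(T)\}$, $\mathrm{type}(T)=|J^*(T)|$; $J(T)=\{i: t_i\nmid \mathrm{lcm}(T_i)\}$, $\mathrm{cotype}(T)=|J(T)|$. A hat denotes omission. *)

From HB Require Import structures.
From mathcomp Require Import all_boot all_order all_algebra.
From mathcomp Require Import mpoly.
Set Implicit Arguments. Unset Strict Implicit. Unset Printing Implicit Defensive.
Import GRing.Theory.
Local Open Scope ring_scope.

Definition gcdT n (t : 'I_n -> nat) : nat := \big[gcdn/0%N]_(i < n) t i.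
Definition lcmT n (t : 'I_n -> nat) : nat := \big[lcmn/1%N]_(i < n) t i.
Definition gcd_hat n (t : 'I_n -> nat) (i : 'I_n) : nat :=
  \big[gcdn/0%N]_(j < n | j != i) t j.
Definition lcm_hat n (t : 'I_n -> nat) (i : 'I_n) : nat :=
  \big[lcmn/1%N]_(j < n | j != i) t j.
Definition Jstar n (t : 'I_n -> nat) : {set 'I_n} :=
  [set i | gcd_hat t i != gcdT t].
Definition typeT n (t : 'I_n -> nat) : nat := #|Jstar t|.
Definition Jset n (t : 'I_n -> nat) : {set 'I_n} :=
  [set i | ~~ (t i %| lcm_hat t i)%N].
Definition cotypeT n (t : 'I_n -> nat) : nat := #|Jset t|.

Definition dvec n (a : 'I_n -> nat) : 'I_n -> nat := fun i => (lcmT a %/ a i)%N.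

Definition fS (k : fieldType) n (a : 'I_n -> nat) : {mpoly k[n]} :=
  \sum_(i < n) 'X_i ^+ a i.

Definition dvdr (R : comNzRingType) (x y : R) : Prop := exists c, y = x * c.
Definition is_unit (R : comNzRingType) (u : R) : Prop := exists v, u * v = 1.
Definition prime_elt (R : comNzRingType) (p : R) : Prop :=
  [/\ p <> 0, ~ is_unit p &
      forall x y, dvdr p (x * y) -> dvdr p x \/ dvdr p y].
Definition associates (R : comNzRingType) (x y : R) : Prop :=
  exists u, is_unit u /\ x = u * y.

Definition whomog (k : fieldType) n (w : 'I_n -> nat) (e : nat)
  (p : {mpoly k[n]}) : Prop :=
  forall m, m \in msupp p -> (\sum_(i < n) w i * m i)%N = e.

(* B is presented as k[X]/<f> through the surjection pi with kernel <f>. *)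
Definition is_quotient_by (k : fieldType) n (f : {mpoly k[n]})
  (B : comNzRingType) (pi : {rmorphism {mpoly k[n]} -> B}) : Prop :=
  (forall b : B, exists p, pi p = b) /\
  (forall p, pi p = 0 <-> exists q, p = f * q).

(* Standard N-grading on B_S: the degree-e component is (the set of b satisfying homog_elt w pi e b), the image of the
   polynomials that are weighted-homogeneous of degree e for weights d. *)
Definition homog_elt (k : fieldType) n (w : 'I_n -> nat)
  (B : comNzRingType) (pi : {rmorphism {mpoly k[n]} -> B}) (e : nat) (b : B)
  : Prop :=
  exists p, whomog w e p /\ pi p = b.

From HB Require Import structures.
From mathcomp Require Import all_boot all_order all_algebra.
From mathcomp Require Import mpoly separable.
From mathcomp Require Import zify ring.
From Stdlib Require Import Classical.
Set Implicit Arguments. Unset Strict Implicit. Unset Printing Implicit Defensive.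
Import GRing.Theory.

(* (a), (b): every a_i divides L, so for every nonempty set J of indices
   gcd_(j in J) (L / a_j) = L / lcm_(j in J) a_j.  Hence gcd(d) = 1, and
   gcd(d without d_i) = L / lcm(a without a_i), which is 1 exactly when
   dropping a_i does not change the lcm, i.e. when a_i divides the lcm of the
   other entries.

   (c): modulo x_i, B_S becomes k[X_j, j <> i] / (g) with
   g = sum_(j <> i) X_j^a_j, so x_i is prime as soon as g is.  As n >= 4,
   g = X^a + (Y^b + c) with c <> 0 a polynomial in the remaining variables.
   Over K = Frac k[X] the polynomial Y^b + c is separable (char k = 0), so it
   has an irreducible factor p of multiplicity one, and g is Eisenstein at p
   as a monic polynomial in X over K[Y]; this rules out a product of two
   nonzero remainders modulo g being divisible by g.  Finally X_i does not lie
   in (X_j, f) for i <> j: setting X_j to 0 in X_i = X_j r + f t gives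
   X_i = f' t', setting X_i to 0 then shows that X_i divides t', so f' would
   divide 1, although it vanishes at the origin. *)

Lemma exists_notin n (s : seq 'I_n) : size s < n -> exists z : 'I_n, z \notin s.
Proof.
move=> lt_sn; apply/existsP; apply: contraTT lt_sn => /existsPn s_full.
rewrite -leqNgt -[X in X <= _]card_ord; apply: leq_trans (card_size s).
by apply/subset_leq_card/subsetP => z _; have := s_full z; rewrite negbK.
Qed.

Lemma exists_neq n (i : 'I_n) : 1 < n -> exists j : 'I_n, j != i.
Proof. by case/(@exists_notin n [:: i]) => j; rewrite inE; exists j. Qed.

Lemma gcdn_divn_lcmn (L x y : nat) : 0 < x -> 0 < y -> x %| L -> y %| L ->
  gcdn (L %/ x) (L %/ y) = L %/ lcmn x y.
Proof.
move=> x_gt0 y_gt0 xL yL.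
have gcd_gt0 : 0 < gcdn x y by rewrite gcdn_gt0 x_gt0.
suff E : gcdn (L %/ x) (L %/ y) * lcmn x y = L.
  by rewrite -[in RHS]E mulnK // lcmn_gt0 x_gt0 y_gt0.
apply/eqP; rewrite -(eqn_pmul2r gcd_gt0) -mulnA muln_lcm_gcd.
rewrite muln_gcdl mulnA divnK // [x * y]mulnC mulnA divnK //.
by rewrite -muln_gcdr gcdnC.
Qed.

Lemma big_gcdn_divn (I : eqType) (r : seq I) (P : pred I) (a : I -> nat) (L : nat) :
  (forall j, 0 < a j) -> (forall j, a j %| L) -> has P r ->
  \big[gcdn/0]_(j <- r | P j) (L %/ a j) = L %/ \big[lcmn/1]_(j <- r | P j) a j.
Proof.
move=> a_gt0 aL; elim: r => [//|x r IH] /=; rewrite !big_cons.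
case: (P x) => /=; last exact: IH.
move=> _; have [Pr|Pr] := boolP (has P r); last by rewrite !big_hasC // gcdn0 lcmn1.
rewrite IH // gcdn_divn_lcmn //.
  by apply: (big_ind (leq 1)) => // u v; rewrite lcmn_gt0 => -> ->.
by apply: (big_ind (dvdn^~ L)) => // u v; rewrite dvdn_lcm => -> ->.
Qed.

Section TypeCotype.
Variables (n : nat) (a : 'I_n -> nat).
Hypothesis a_gt0 : forall i, 0 < a i.

Lemma lcmT_split i : lcmT a = lcmn (a i) (lcm_hat a i).
Proof. by rewrite /lcmT (bigD1 i). Qed.

Lemma dvdn_lcmT i : a i %| lcmT a.
Proof. by rewrite (lcmT_split i) dvdn_lcml. Qed.

Lemma lcm_hat_dvdn i : lcm_hat a i %| lcmT a.
Proof. by rewrite (lcmT_split i) dvdn_lcmr. Qed.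

Lemma lcmT_gt0 : 0 < lcmT a.
Proof. by apply: (big_ind (leq 1)) => // u v; rewrite lcmn_gt0 => -> ->. Qed.

Lemma gcdT_dvec : 0 < n -> gcdT (dvec a) = 1.
Proof.
move=> n_gt0; rewrite /gcdT /dvec (big_gcdn_divn a_gt0 dvdn_lcmT) ?divnn ?lcmT_gt0 //.
by apply/(@hasP 'I_n); exists (Ordinal n_gt0); rewrite ?mem_index_enum.
Qed.

Lemma gcd_hat_dvec i : 1 < n -> gcd_hat (dvec a) i = lcmT a %/ lcm_hat a i.
Proof.
move=> n_gt1; rewrite /gcd_hat /dvec (big_gcdn_divn a_gt0 dvdn_lcmT) //.
have [j ji] := exists_neq i n_gt1.
by apply/(@hasP 'I_n); exists j; rewrite ?mem_index_enum.
Qed.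

Lemma gcd_hat_dvec_eq1 i : 1 < n ->
  (gcd_hat (dvec a) i == 1) = (lcm_hat a i == lcmT a).
Proof.
move=> n_gt1; rewrite gcd_hat_dvec //; apply/eqP/eqP => [E|->].
  by rewrite -[RHS](divnK (lcm_hat_dvdn i)) E mul1n.
by rewrite divnn lcmT_gt0.
Qed.

Lemma lcm_hat_eq_lcmT i : (lcm_hat a i == lcmT a) = (i \notin Jset a).
Proof.
rewrite inE negbK (lcmT_split i).
by apply/eqP/idP => [->|/lcmn_idPr ->//]; apply: dvdn_lcml.
Qed.

Lemma Jstar_dvec : 1 < n -> Jstar (dvec a) = Jset a.
Proof.
move=> n_gt1; apply/setP => i.
by rewrite !inE gcdT_dvec ?(ltnW n_gt1) // gcd_hat_dvec_eq1 // lcm_hat_eq_lcmT negbK inE.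
Qed.

End TypeCotype.

Local Open Scope ring_scope.

Lemma ex_minimal_nat (P : nat -> Prop) :
  (exists i, P i) -> exists i, P i /\ forall j, (j < i)%N -> ~ P j.
Proof.
move=> [i]; elim/ltn_ind: i => i IH Pi.
have [[j [lt_ji Pj]]|no_smaller] := classic (exists j, (j < i)%N /\ P j).
  exact: IH lt_ji Pj.
by exists i; split=> // j lt_ji Pj; apply: no_smaller; exists j.
Qed.

Section DvdrTheory.
Variable R : comNzRingType.
Implicit Types p x y z : R.

Lemma dvdr0 p : dvdr p 0.
Proof. by exists 0; rewrite mulr0. Qed.

Lemma dvdr_add p x y : dvdr p x -> dvdr p y -> dvdr p (x + y).
Proof. by move=> [c ->] [d ->]; exists (c + d); rewrite mulrDr. Qed.

Lemma dvdr_sub p x y : dvdr p x -> dvdr p y -> dvdr p (x - y).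
Proof. by move=> [c ->] [d ->]; exists (c - d); rewrite mulrBr. Qed.

Lemma dvdr_mulr p x y : dvdr p x -> dvdr p (x * y).
Proof. by move=> [c ->]; exists (c * y); rewrite mulrA. Qed.

Lemma dvdr_mull p x y : dvdr p y -> dvdr p (x * y).
Proof. by rewrite mulrC; apply: dvdr_mulr. Qed.

Lemma dvdr_mul p q x y : dvdr p x -> dvdr q y -> dvdr (p * q) (x * y).
Proof. by move=> [c ->] [d ->]; exists (c * d); rewrite mulrACA. Qed.

Lemma dvdr_sum p (I : Type) (r : seq I) (P : pred I) (F : I -> R) :
  (forall i, P i -> dvdr p (F i)) -> dvdr p (\sum_(i <- r | P i) F i).
Proof. by move=> pF; apply: big_ind => //; [apply: dvdr0 | apply: dvdr_add]. Qed.

End DvdrTheory.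

(* Euclid's lemma for p: (p) is a prime ideal or the whole ring. *)
Definition euclid (R : comNzRingType) (p : R) : Prop :=
  forall x y, dvdr p (x * y) -> dvdr p x \/ dvdr p y.

Lemma euclid_retract (R S : comNzRingType) (f : {rmorphism R -> S})
    (g : {rmorphism S -> R}) (p : R) :
  cancel f g -> euclid (f p) -> euclid p.
Proof.
move=> fK fp_euclid x y [c xyE].
have : dvdr (f p) (f x * f y) by exists (f c); rewrite -!rmorphM xyE.
by case/fp_euclid=> -[d Ed]; [left | right];
  exists (g d); rewrite -[LHS]fK Ed rmorphM fK.
Qed.

Lemma monic_euclid (A : comNzRingType) (D : {poly A}) : D \is monic ->
  (forall r s : {poly A}, (size r < size D)%N -> (size s < size D)%N ->
     dvdr D (r * s) -> r = 0 \/ s = 0) ->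
  euclid D.
Proof.
move=> Dmonic small_factors x y [c xyE].
have D0 : D != 0 by apply: monic_neq0.
set q1 := Pdiv.Ring.rdivp x D; set r1 := Pdiv.Ring.rmodp x D.
set q2 := Pdiv.Ring.rdivp y D; set r2 := Pdiv.Ring.rmodp y D.
have xE : x = q1 * D + r1 := Pdiv.RingMonic.rdivp_eq Dmonic x.
have yE : y = q2 * D + r2 := Pdiv.RingMonic.rdivp_eq Dmonic y.
have r12 : dvdr D (r1 * r2).
  exists (c - (q1 * q2 * D + q1 * r2 + r1 * q2)).
  by rewrite mulrBr -xyE xE yE; ring.
have [r1_0|r2_0] := small_factors r1 r2
  (Pdiv.Ring.ltn_rmodpN0 _ D0) (Pdiv.Ring.ltn_rmodpN0 _ D0) r12.
  by left; exists q1; rewrite xE r1_0 addr0 mulrC.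
by right; exists q2; rewrite yE r2_0 addr0 mulrC.
Qed.

Lemma dvdr_coefM_lowest (R : comNzRingType) (p : R) (u w : {poly R}) i0 j0 :
  (forall i, (i < i0)%N -> dvdr p u`_i) -> (forall j, (j < j0)%N -> dvdr p w`_j) ->
  dvdr p (u * w)`_(i0 + j0) -> dvdr p (u`_i0 * w`_j0).
Proof.
move=> pu pw; rewrite coefM (bigD1 (Ordinal (leq_addr j0 i0.+1))) //= addKn => pS.
suff pRest : dvdr p (\sum_(j < (i0 + j0).+1 | j != Ordinal (leq_addr j0 i0.+1))
                       u`_j * w`_(i0 + j0 - j)).
  by have := dvdr_sub pS pRest; rewrite addrK.
apply: dvdr_sum => j; rewrite -val_eqE /= => ji0.
have lt_j := ltn_ord j.
have [lt_ji0|lt_i0j] : (j < i0)%N \/ (i0 < j)%N by lia.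
  exact/dvdr_mulr/pu.
by apply/dvdr_mull/pw; lia.
Qed.

Lemma dvdr_coefM_low (R : comNzRingType) (p : R) (u w : {poly R}) i0 j0 k :
  (forall i, (i < i0)%N -> dvdr p u`_i) -> (forall j, (j < j0)%N -> dvdr p w`_j) ->
  (k < i0)%N -> (k < j0)%N -> dvdr (p * p) (u * w)`_k.
Proof.
move=> pu pw lt_ki0 lt_kj0; rewrite coefM; apply: dvdr_sum => j _.
have lt_j := ltn_ord j.
by apply: dvdr_mul; [apply: pu | apply: pw]; lia.
Qed.

Lemma dvdr_coefs_polyC (R : comNzRingType) (p : R) (u : {poly R}) :
  (forall i, dvdr p u`_i) -> exists u', u = p%:P * u'.
Proof.
move=> pu; have ex_i i : exists c, u`_i == p * c by have [c ->] := pu i; exists c.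
exists (\poly_(i < size u) xchoose (ex_i i)); apply/polyP => i.
rewrite coefCM coef_poly; case: ltnP => [_|le_ui]; first exact/eqP/(xchooseP (ex_i i)).
by rewrite mulr0 nth_default.
Qed.

Section Eisenstein.
Variables (R : idomainType) (p h : R) (a : nat) (mu : R -> nat).
Hypotheses (p_neq0 : p != 0) (p_euclid : euclid p).
Hypotheses (p_dvd_h : dvdr p h) (p2_ndvd_h : ~ dvdr (p * p) h).
Hypothesis a_gt0 : (0 < a)%N.
(* [mu] only makes repeated division by p terminate. *)
Hypothesis mu_mul : forall c, c != 0 -> (mu c < mu (p * c)%R)%N.

Local Notation G := ('X^a + h%:P : {poly R}).

Lemma coef_eisenstein_mul (s : {poly R}) k :
  (G * s)`_k = (if (k < a)%N then 0 else s`_(k - a)) + h * s`_k.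
Proof. by rewrite mulrDl coefD coefXnM coefCM. Qed.

Lemma dvdr_of_sq_dvdr_mul x : dvdr (p * p) (h * x) -> dvdr p x.
Proof.
have [e he] := p_dvd_h; move=> [c hc].
have /p_euclid[[f hf]|//] : dvdr p (e * x).
  by exists c; apply: (mulfI p_neq0); rewrite mulrA -he hc mulrA.
by case: p2_ndvd_h; exists f; rewrite he hf mulrA.
Qed.

Lemma eisenstein_content (u w s : {poly R}) :
  (size u <= a)%N -> (size w <= a)%N -> u * w = G * s ->
  (forall i, dvdr p u`_i) \/ (forall j, dvdr p w`_j).
Proof.
move=> su sw E; apply: NNPP => /not_or_and[/not_all_ex_not nu /not_all_ex_not nw].
have [i0 [ni0 mi0]] := ex_minimal_nat nu.
have [j0 [nj0 mj0]] := ex_minimal_nat nw.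
have pu i : (i < i0)%N -> dvdr p u`_i by move/mi0/NNPP.
have pw j : (j < j0)%N -> dvdr p w`_j by move/mj0/NNPP.
have lt_i0a : (i0 < a)%N.
  rewrite ltnNge; apply/negP => /(leq_trans su) /(nth_default 0) ui0.
  by apply: ni0; rewrite ui0; apply: dvdr0.
have lt_j0a : (j0 < a)%N.
  rewrite ltnNge; apply/negP => /(leq_trans sw) /(nth_default 0) wj0.
  by apply: nj0; rewrite wj0; apply: dvdr0.
have top : ~ dvdr p (G * s)`_(i0 + j0).
  by rewrite -E => /(dvdr_coefM_lowest pu pw) /p_euclid[].
rewrite coef_eisenstein_mul in top.
case: ltnP top => [_|le_a] top; first by apply: top; rewrite add0r; apply: dvdr_mulr.
have p2k : dvdr (p * p) (G * s)`_(i0 + j0 - a).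
  by rewrite -E; apply: (dvdr_coefM_low pu pw); lia.
rewrite coef_eisenstein_mul ifT ?add0r in p2k; last by lia.
by apply: top; apply: dvdr_add (dvdr_of_sq_dvdr_mul p2k) (dvdr_mulr _ p_dvd_h).
Qed.

Lemma eisenstein_dvdr_coefs (s : {poly R}) :
  (forall k, dvdr p (G * s)`_k) -> forall k, dvdr p s`_k.
Proof.
move=> pGs k; have [m] := ubnP (size s - k)%N; elim: m k => // m IH k lt_m.
have [le_sk|lt_ks] := leqP (size s) k; first by rewrite nth_default //; apply: dvdr0.
have -> : s`_k = (G * s)`_(k + a) - h * s`_(k + a).
  by rewrite coef_eisenstein_mul ltnNge leq_addl /= addnK addrK.
by apply: dvdr_sub (pGs _) (dvdr_mull _ (IH _ _)); lia.
Qed.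

Lemma eisenstein_cancel (u w s : {poly R}) :
  p%:P * u * w = G * s -> exists s', u * w = G * s'.
Proof.
move=> E; have [|s' sE] := @dvdr_coefs_polyC _ p s.
  by apply: eisenstein_dvdr_coefs => k; rewrite -E -mulrA coefCM; exists (u * w)`_k.
exists s'; apply: (mulfI (_ : p%:P != 0)); first by rewrite polyC_eq0.
by rewrite mulrA E sE mulrCA.
Qed.

Let measure (u : {poly R}) := (\sum_(i < size u) mu u`_i)%N.

Lemma measure_polyC_mul u : u != 0 -> (measure u < measure (p%:P * u))%N.
Proof.
move=> u0; rewrite /measure size_Cmul //.
have lt_top : ((size u).-1 < size u)%N by rewrite ltn_predL size_poly_gt0.
rewrite (bigD1 (Ordinal lt_top)) // [X in (_ < X)%N](bigD1 (Ordinal lt_top)) //=.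
rewrite -addSn leq_add //.
  by rewrite coefCM mu_mul // -lead_coefE lead_coef_eq0.
apply: leq_sum => i _; rewrite coefCM.
have [->|ui0] := eqVneq u`_i 0; first by rewrite mulr0.
exact: ltnW (mu_mul ui0).
Qed.

Lemma eisenstein_mul_eq0 (u w : {poly R}) :
  (size u <= a)%N -> (size w <= a)%N -> dvdr G (u * w) -> u = 0 \/ w = 0.
Proof.
move=> su sw [s E]; have [N] := ubnP (measure u + measure w).
elim: N u w s su sw E => [|N IH] u w s su sw E; first by rewrite ltn0.
move=> lt_N; wlog pu : u w s su sw E lt_N / forall i, dvdr p u`_i.
  move=> wlog_pu; have [pu|pw] := eisenstein_content su sw E; first exact: (wlog_pu u w s).
  have := wlog_pu w u s sw su; rewrite (mulrC w) (addnC (measure w)).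
  by case/(_ E lt_N pw); [right | left].
have [->|u0] := eqVneq u 0; [by left | right].
have [u' uE] := dvdr_coefs_polyC pu.
have [s' E'] : exists s', u' * w = G * s' by apply: (eisenstein_cancel (s := s)); rewrite -uE.
have u'0 : u' != 0 by apply: contraNneq u0 => u'0; rewrite uE u'0 mulr0.
have su' : (size u' <= a)%N by rewrite -(size_Cmul _ p_neq0) -uE.
have [|u'_0|//] := IH u' w s' su' sw E'; last by rewrite u'_0 eqxx in u'0.
by move: (measure_polyC_mul u'0); rewrite -uE; lia.
Qed.

End Eisenstein.

Section PolyOverField.
Variable F : fieldType.
Implicit Types p q : {poly F}.

Lemma dvdr_dvdp p q : dvdr p q <-> p %| q.
Proof.
split=> [[c ->]|/dvdpP[c ->]]; first exact: dvdp_mulr.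
by exists c; rewrite mulrC.
Qed.

Lemma irreducible_prime_elt p : irreducible_poly p -> prime_elt p.
Proof.
move=> p_irr; split; first exact/eqP/irredp_neq0.
  move=> [v pv1]; have := dvdp_mulIl p v; rewrite pv1 dvdp1.
  by case: p_irr => /gtn_eqF ->.
move=> x y /dvdr_dvdp p_xy; have [px|npx] := boolP (p %| x).
  by left; apply/dvdr_dvdp.
right; apply/dvdr_dvdp.
by rewrite -(Gauss_dvdpr _ (_ : coprimep p x)) // irreducible_poly_coprime.
Qed.

Lemma irreducible_factor q : (1 < size q)%N -> exists2 p, irreducible_poly p & p %| q.
Proof.
move=> q_gt1.
pose P m := exists p, [/\ p %| q, (1 < size p)%N & size p = m].
have [m [[p [pq p_gt1 <-]] min_p]] : exists m, P m /\ forall j, (j < m)%N -> ~ P j.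
  by apply: ex_minimal_nat; exists (size q), q.
exists p => //; split=> // d d_neq1 dp.
have p0 : p != 0 by rewrite -size_poly_gt0 ltnW.
have d0 : d != 0 by apply: contraTneq dp => ->; rewrite dvd0p.
have d_gt1 : (1 < size d)%N.
  by move: d_neq1 d0; rewrite -size_poly_gt0; case: (size d) => [|[]].
rewrite -dvdp_size_eqp // eqn_leq dvdp_leq //= leqNgt; apply/negP => lt_dp.
by apply: (min_p _ lt_dp); exists d; split=> //; apply: dvdp_trans dp pq.
Qed.

Lemma separable_XnaddC (b : nat) (c : F) :
  (0 < b)%N -> c != 0 -> b%:R != 0 :> F -> separable_poly ('X^b + c%:P).
Proof.
move=> b_gt0 c0 b0; rewrite unlock derivD derivC addr0 derivXn.
rewrite -scaler_nat coprimepZr // coprimep_expr // coprimepX rootE !hornerE.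
by rewrite expr0n gtn_eqF // add0r.
Qed.

Lemma simple_irreducible_factor q : separable_poly q -> (1 < size q)%N ->
  exists p, [/\ irreducible_poly p, p %| q & ~ p * p %| q].
Proof.
move=> q_sep q_gt1; have [p p_irr pq] := irreducible_factor q_gt1.
exists p; split=> //; rewrite -expr2 separable_nosquare //.
by case: p_irr => /gtn_eqF ->.
Qed.

End PolyOverField.

Lemma euclid_XnaddXnaddC (S : idomainType) (b1 b2 : nat) (c : S) :
  (0 < b1)%N -> (0 < b2)%N -> c != 0 -> b2%:R != 0 :> S ->
  euclid ('X^b1 + ('X^b2 + c%:P)%:P : {poly {poly S}}).
Proof.
move=> b1_gt0 b2_gt0 c0 b2_0.
pose M : {rmorphism {poly {poly S}} -> {poly {poly {fraction S}}}} :=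
  map_poly (map_poly (@tofrac S)).
have tofrac_inj : injective (@tofrac S) by move=> u v /eqP; rewrite tofrac_eq => /eqP.
have map_inj : injective (map_poly (@tofrac S)) by apply: map_inj_poly; rewrite ?rmorph0.
have M_inj : injective M by apply: map_inj_poly; rewrite ?rmorph0.
have size_M r : size (M r) = size r by apply: size_map_inj_poly; rewrite ?rmorph0.
set h := 'X^b2 + (tofrac c)%:P.
have M_D : M ('X^b1 + ('X^b2 + c%:P)%:P) = 'X^b1 + h%:P.
  by rewrite rmorphD /= map_polyXn map_polyC /= rmorphD /= map_polyXn map_polyC.
have c_neq0 : tofrac c != 0 by rewrite tofrac_eq0.
have b2_neq0 : b2%:R != 0 :> {fraction S} by rewrite -(rmorph_nat (@tofrac S)) tofrac_eq0.
have [|p [p_irr p_h p2_h]] :=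
  simple_irreducible_factor (separable_XnaddC b2_gt0 c_neq0 b2_neq0).
  by rewrite size_XnaddC.
have [/eqP p_neq0 _ p_euclid] := irreducible_prime_elt p_irr.
have size_mul_p (d : {poly {fraction S}}) : d != 0 -> (size d < size (p * d)%R)%N.
  move=> d0; case: p_irr => p_gt1 _; rewrite size_mul // addnC -subn1 -addnBA.
    by rewrite -[X in (X < _)%N]addn0 ltn_add2l subn_gt0.
  exact: ltnW.
have p_dvd_h : dvdr p h by apply/dvdr_dvdp.
have p2_ndvd_h : ~ dvdr (p * p) h by move/dvdr_dvdp.
apply: monic_euclid; first exact: monicXnaddC.
move=> r s; rewrite size_XnaddC // !ltnS => sr ss [t rsE].
have : dvdr ('X^b1 + h%:P) (M r * M s) by exists (M t); rewrite -M_D -!rmorphM rsE.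
case/(eisenstein_mul_eq0 p_neq0 p_euclid p_dvd_h p2_ndvd_h b1_gt0 size_mul_p);
  rewrite ?size_M //.
- by move=> Mr0; left; apply: M_inj; rewrite Mr0 rmorph0.
- by move=> Ms0; right; apply: M_inj; rewrite Ms0 rmorph0.
Qed.

Definition sum_Xpow (R : comNzRingType) n (T : pred 'I_n) (a : 'I_n -> nat) :
  {mpoly R[n]} := \sum_(l | T l) 'X_l ^+ a l.

Section MpolySubstitution.
Variables (R : comNzRingType) (n : nat).
Implicit Types (p : {mpoly R[n]}) (T : pred 'I_n) (a : 'I_n -> nat).

Lemma mpoly_rmorph_id (f : {rmorphism {mpoly R[n]} -> {mpoly R[n]}}) :
  (forall c, f c%:MP = c%:MP) -> (forall i, f 'X_i = 'X_i) -> forall p, f p = p.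
Proof.
move=> fC fX p; rewrite [in RHS](mpolyE p) [in LHS](mpolyE p) rmorph_sum.
apply: eq_bigr => m _; rewrite -mul_mpolyC rmorphM fC mpolyXE_id rmorph_prod.
by congr (_ * _); apply: eq_bigr => i _; rewrite rmorphXn fX.
Qed.

Definition subX0 (i : 'I_n) : {rmorphism {mpoly R[n]} -> {mpoly R[n]}} :=
  mmap (@mpolyC n R) (fun l => if l == i then 0 else 'X_l).

Lemma subX0X i l : subX0 i 'X_l = if l == i then 0 else 'X_l.
Proof. by rewrite /= mmapX mmap1U. Qed.

Lemma subX0C i c : subX0 i c%:MP = c%:MP.
Proof. by rewrite /= mmapC. Qed.

Lemma dvdr_X_subX0 i p : dvdr 'X_i (p - subX0 i p).
Proof.
rewrite [p in p - _]mpolyE [p in subX0 i p]mpolyE rmorph_sum -sumrB.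
apply: dvdr_sum => m _; rewrite -mul_mpolyC rmorphM subX0C -mulrBr; apply: dvdr_mull.
rewrite /= mmapX /mmap1 (@mpolyXE_id n R m).
have [mi0|mi_gt0] := posnP (m i).
  rewrite [X in _ - X](eq_bigr (fun l => 'X_l ^+ m l)) ?subrr; first exact: dvdr0.
  by move=> l _; case: eqP => // ->; rewrite mi0 !expr0.
rewrite [X in _ - X](bigD1 i) //= eqxx expr0n gtn_eqF // mul0r subr0.
rewrite (bigD1 i) //=; apply: dvdr_mulr.
by exists ('X_i ^+ (m i).-1); rewrite -exprS prednK.
Qed.

Lemma sum_XpowD1 T a x : T x ->
  sum_Xpow R T a = 'X_x ^+ a x + sum_Xpow R [pred l | T l && (l != x)] a.
Proof. by move=> Tx; rewrite /sum_Xpow (bigD1 x). Qed.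

Lemma subX0_sum_Xpow i T a : (forall l, 0 < a l)%N ->
  subX0 i (sum_Xpow R T a) = sum_Xpow R [pred l | T l && (l != i)] a.
Proof.
move=> a_gt0; rewrite rmorph_sum [RHS]big_mkcondr /=.
apply: eq_bigr => l _; rewrite rmorphXn subX0X.
by case: (eqVneq l i) => // _; rewrite expr0n gtn_eqF.
Qed.

Lemma meval_sum_Xpow (v : 'I_n -> R) T a :
  meval v (sum_Xpow R T a) = \sum_(l | T l) v l ^+ a l.
Proof. by rewrite rmorph_sum; apply: eq_bigr => l _; rewrite rmorphXn /= mevalXU. Qed.

Lemma meval0_sum_Xpow T a : (forall l, 0 < a l)%N -> meval (fun _ => 0) (sum_Xpow R T a) = 0.
Proof. by move=> a_gt0; rewrite meval_sum_Xpow big1 // => l _; rewrite expr0n gtn_eqF. Qed.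

Lemma sum_Xpow_neq0 T a z : (forall l, 0 < a l)%N -> T z -> sum_Xpow R T a != 0.
Proof.
move=> a_gt0 Tz; apply/eqP => /(congr1 (meval (fun l => (l == z)%:R))).
rewrite meval_sum_Xpow rmorph0 (bigD1 z) //= eqxx expr1n big1 ?addr0.
  by move/eqP; rewrite oner_eq0.
by move=> l /andP[_ /negbTE ->]; rewrite expr0n gtn_eqF.
Qed.

Lemma mpolyXU_neq0 i : 'X_i != 0 :> {mpoly R[n]}.
Proof.
apply/eqP => /(congr1 (meval (fun _ => 1))).
by rewrite mevalXU rmorph0 => /eqP; rewrite oner_eq0.
Qed.

End MpolySubstitution.
Arguments subX0 {R n} i.

Lemma sum_Xpow_euclid (k : fieldType) n (T : pred 'I_n) (a : 'I_n -> nat) (x y z : 'I_n) :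
  [pchar k] =i pred0 -> (forall l, 0 < a l)%N ->
  y != x -> z != x -> z != y -> T x -> T y -> T z ->
  euclid (sum_Xpow k T a).
Proof.
move=> k_char0 a_gt0 yx zx zy Tx Ty Tz.
set c := sum_Xpow k [pred l | [pred l | T l && (l != x)] l && (l != y)] a.
have gE : sum_Xpow k T a = 'X_x ^+ a x + ('X_y ^+ a y + c).
  by rewrite (sum_XpowD1 _ a Tx) (@sum_XpowD1 _ _ _ a y) //= Ty yx.
have c_neq0 : c != 0 by apply: (@sum_Xpow_neq0 _ _ _ a z a_gt0); rewrite /= Tz zx zy.
pose vars l : {poly {poly {mpoly k[n]}}} :=
  if l == x then 'X else if l == y then 'X%:P else ('X_l)%:P%:P.
pose Psi : {rmorphism {mpoly k[n]} -> {poly {poly {mpoly k[n]}}}} :=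
  mmap (polyC \o polyC \o @mpolyC n k) vars.
pose E : {rmorphism {poly {poly {mpoly k[n]}}} -> {mpoly k[n]}} :=
  horner_eval 'X_x \o map_poly (horner_eval 'X_y).
have PsiX l : Psi 'X_l = vars l by rewrite /= mmapX mmap1U.
have PsiK : cancel Psi E.
  apply: (mpoly_rmorph_id (f := E \o Psi)) => [d|l] /=.
    by rewrite mmapC /= map_polyC /= !horner_evalE !hornerC.
  rewrite PsiX /vars; case: eqP => [->|_]; first by rewrite map_polyX horner_evalE hornerX.
  case: eqP => [->|_]; first by rewrite map_polyC /= !horner_evalE hornerX hornerC.
  by rewrite map_polyC /= !horner_evalE !hornerC.
have Psic : Psi c = c%:P%:P.
  rewrite /c /sum_Xpow !rmorph_sum; apply: eq_bigr => l /andP[/andP[_ lx] ly].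
  by rewrite !rmorphXn PsiX /vars (negbTE lx) (negbTE ly).
apply: (euclid_retract PsiK).
have -> : Psi (sum_Xpow k T a) = 'X^(a x) + ('X^(a y) + c%:P)%:P.
  by rewrite gE !rmorphD !rmorphXn Psic !PsiX /vars eqxx (negbTE yx) eqxx.
apply: euclid_XnaddXnaddC; rewrite ?a_gt0 //.
by rewrite -mpolyC_nat mpolyC_eq0; move/pcharf0P: k_char0 => ->; rewrite -lt0n.
Qed.

Lemma whomogX (k : fieldType) n (w : 'I_n -> nat) i : whomog w (w i) ('X_i : {mpoly k[n]}).
Proof.
move=> m; rewrite msuppX inE => /eqP ->.
rewrite (bigD1 i) //= mnm1E eqxx muln1 big1 ?addn0 // => l li.
by rewrite mnm1E eq_sym (negbTE li) muln0.
Qed.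

Section QuotientRing.
Variables (k : fieldType) (n : nat) (a : 'I_n -> nat).
Variables (B : comNzRingType) (pi : {rmorphism {mpoly k[n]} -> B}).
Hypotheses (k_char0 : [pchar k] =i pred0) (n_gt3 : (3 < n)%N).
Hypotheses (a_gt0 : forall i, (0 < a i)%N) (pi_quot : is_quotient_by (fS k a) pi).

Lemma fS_sum_Xpow : fS k a = sum_Xpow k predT a.
Proof. by []. Qed.

Lemma X_notin_ideal (T : pred 'I_n) (i j z : 'I_n) :
  i != j -> T z -> z != i -> z != j ->
  ~ exists r t, 'X_i = 'X_j * r + sum_Xpow k T a * t.
Proof.
move=> ij Tz zi zj [r [t E]].
have := congr1 (subX0 j) E; rewrite rmorphD !rmorphM !subX0X eqxx (negbTE ij).
rewrite mul0r add0r subX0_sum_Xpow //; set g := sum_Xpow _ _ a => Ej.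
have := congr1 (subX0 i) Ej; rewrite rmorphM subX0X eqxx subX0_sum_Xpow // => Eij.
have gi_neq0 : sum_Xpow k [pred l | [pred l | T l && (l != j)] l && (l != i)] a != 0.
  by apply: (@sum_Xpow_neq0 _ _ _ a z a_gt0); rewrite /= Tz zi zj.
have tij0 : subX0 i (subX0 j t) = 0.
  by move/eqP: Eij; rewrite eq_sym mulf_eq0 (negbTE gi_neq0) => /eqP.
have [q qE] := dvdr_X_subX0 i (subX0 j t); rewrite tij0 subr0 in qE.
have : 'X_i * (1 - g * q) = 0 by rewrite mulrBr mulr1 mulrCA -qE -Ej subrr.
move/eqP; rewrite mulf_eq0 (negbTE (mpolyXU_neq0 _ _)) /= subr_eq0.
move=> /eqP /(congr1 (meval (fun _ => 0))).
by rewrite rmorph1 rmorphM /= meval0_sum_Xpow // mul0r => /eqP; rewrite oner_eq0.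
Qed.

Lemma dvdr_piX i p : dvdr (pi 'X_i) (pi p) <-> exists r t, p = 'X_i * r + fS k a * t.
Proof.
case: pi_quot => pi_onto pi_ker; split=> [[b pE]|[r [t ->]]].
  have [r rE] := pi_onto b.
  have /pi_ker[t tE] : pi (p - 'X_i * r) = 0 by rewrite rmorphB rmorphM rE pE subrr.
  by exists r, t; rewrite -tE addrC subrK.
have f0 : pi (fS k a) = 0 by apply/pi_ker; exists 1; rewrite mulr1.
by exists (pi r); rewrite rmorphD !rmorphM f0 mul0r addr0.
Qed.

Lemma piX_ndvdr i j : i != j -> ~ dvdr (pi 'X_j) (pi 'X_i).
Proof.
move=> ij /dvdr_piX[r [t E]].
have [|z] := @exists_notin n [:: i; j]; first exact: ltn_trans n_gt3.
rewrite !inE => /norP[zi zj].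
by apply: (@X_notin_ideal predT i j z); last exists r, t.
Qed.

Lemma piX_neq0 i : pi 'X_i <> 0.
Proof.
have [j ji] := exists_neq i (ltnW (ltnW n_gt3)).
move=> piX0; apply: (piX_ndvdr (_ : i != j)); first by rewrite eq_sym.
by rewrite piX0; apply: dvdr0.
Qed.

Lemma piX_not_unit i : ~ is_unit (pi 'X_i).
Proof.
have [j ji] := exists_neq i (ltnW (ltnW n_gt3)).
move=> [v Xv1]; apply: (piX_ndvdr ji).
by exists (v * pi 'X_j); rewrite mulrA Xv1 mul1r.
Qed.

Lemma piX_not_associates i j : i != j -> ~ associates (pi 'X_i) (pi 'X_j).
Proof. by move=> ij [u [_ E]]; apply: (piX_ndvdr ij); exists u; rewrite E mulrC. Qed.

Lemma piX_euclid i : euclid (pi 'X_i).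
Proof.
have [|x] := @exists_notin n [:: i]; first exact: ltn_trans n_gt3.
have [|y] := @exists_notin n [:: i; x]; first exact: ltn_trans n_gt3.
have [|z] := @exists_notin n [:: i; x; y]; first exact: n_gt3.
rewrite !inE => /norP[zi /norP[zx zy]] /norP[yi yx] xi.
set g := sum_Xpow k [pred l | predT l && (l != i)] a.
have g_euclid : euclid g.
  by apply: (@sum_Xpow_euclid k n _ a x y z) => //=; rewrite ?xi ?yi ?zi.
have fE : fS k a = 'X_i * 'X_i ^+ (a i).-1 + g.
  by rewrite fS_sum_Xpow (sum_XpowD1 _ a (_ : predT i)) // -exprS prednK.
have lift p : dvdr g (subX0 i p) -> dvdr (pi 'X_i) (pi p).
  move=> [u uE]; have [r rE] := dvdr_X_subX0 i p.
  apply/dvdr_piX; exists (r - 'X_i ^+ (a i).-1 * u), u.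
  by rewrite -[p](subrK (subX0 i p)) rE uE fE; ring.
have [pi_onto _] := pi_quot.
move=> bx by_ [b E]; have [p pE] := pi_onto bx; have [q qE] := pi_onto by_.
have /dvdr_piX[r [t pqE]] : dvdr (pi 'X_i) (pi (p * q)).
  by exists b; rewrite rmorphM pE qE.
have : dvdr g (subX0 i p * subX0 i q).
  exists (subX0 i t); rewrite -rmorphM pqE rmorphD !rmorphM subX0X eqxx mul0r add0r.
  by rewrite fS_sum_Xpow subX0_sum_Xpow.
by rewrite -pE -qE; case/g_euclid => /lift; [left | right].
Qed.

End QuotientRing.

Theorem lemma4p3 (k : fieldType) (n : nat) (a : 'I_n -> nat)
  (B : comNzRingType) (pi : {rmorphism {mpoly k[n]} -> B}) :
  [pchar k] =i pred0 ->
  (4 <= n)%N ->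
  (forall i, 0 < a i)%N ->
  is_quotient_by (fS k a) pi ->
  (* (a) *)
  (gcdT (dvec a) = 1%N /\ typeT (dvec a) = cotypeT a) /\
  (* (b) *)
  (forall i : 'I_n,
     (gcd_hat (dvec a) i != 1%N <-> lcm_hat a i != lcmT a) /\
     (lcm_hat a i != lcmT a <-> i \in Jset a)) /\
  (* (c) *)
  (forall i : 'I_n, homog_elt (dvec a) pi (dvec a i) (pi 'X_i) /\ prime_elt (pi 'X_i)) /\
  (forall i j : 'I_n, i != j -> ~ associates (pi 'X_i) (pi 'X_j)).
Proof.
move=> k_char0 n_gt3 a_gt0 pi_quot.
have n_gt1 : (1 < n)%N by apply: leq_trans n_gt3.
split; [split | split; [move=> i; split | split]].
- exact/gcdT_dvec/ltnW.
- by rewrite /typeT /cotypeT Jstar_dvec.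
- by rewrite gcd_hat_dvec_eq1.
- by rewrite lcm_hat_eq_lcmT negbK.
- move=> i; split; first by exists 'X_i; split; first exact: whomogX.
  split; [exact: piX_neq0 | exact: piX_not_unit | exact: piX_euclid].
- exact: piX_not_associates.
Qed.
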